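(* Let $\mathbb E$ be a finite-dimensional Euclidean space, let $\lambda\in[0,1]$ be fixed, and for $j=1,2$ let $B_j\subset\mathbb E$ be such that the reflector $R_{B_j}$ is pointwise almost nonexpansive with violation $\tilde\epsilon_j$ at all points of $\Lambda_j$ on $U_j$ (where $\Lambda_j,U_j\subset\mathbb E$). Suppose $R_{B_2}\Lambda_2\subseteq\Lambda_1$ and $R_{B_2}U_2\subseteq U_1$. Then the relaxed Douglas–Rachford mapping $$T=\tfrac{\lambda}{2}(R_{B_1}R_{B_2}+\mathrm{Id})+(1-\lambda)P_{B_2}$$ is pointwise almost $\alpha$-firmly nonexpansive at all $y\in\Lambda_2$ on $U_2$ with constant $\alpha=1/2$ and violation $$\tilde\epsilon=\tfrac12\Big[\big(\lambda\sqrt{1+\tilde\epsilon_1}+1-\lambda\big)^2(1+\tilde\epsilon_2)-1\Big].$$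
   Context: For a nonempty closed set $B$, $P_Bx=\operatorname{argmin}_{b\in B}\|b-x\|$ (set-valued in general), $R_B=2P_B-\mathrm{Id}$. For set-valued maps, composition is $TQx=\bigcup_{z\in Qx}Tz$, and sums and scalar multiples are taken elementwise; for a set $S$, $TS=\bigcup_{a\in S}Ta$. A map $T$ is pointwise almost nonexpansive at $y$ on $U$ with violation $\epsilon\in[0,1)$ if $\|x^+-y^+\|\le\sqrt{1+\epsilon}\|x-y\|$ for all $x\in U$, $x^+\in Tx$, $y^+\in Ty$. It is pointwise almost $\alpha$-firmly nonexpansive at $y$ on $U$ with constant $\alpha\in(0,1)$ and violation $\epsilon\in[0,1)$ if $\|x^+-y^+\|^2\le(1+\epsilon)\|x-y\|^2-\frac{1-\alpha}{\alpha}\|(x^+-x)-(y^+-y)\|^2$ for all $x\in U$, $x^+\in Tx$, $y^+\in Ty$. *)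

From HB Require Import structures.
From mathcomp Require Import all_boot all_order all_algebra.
From mathcomp Require Import reals.
Set Implicit Arguments. Unset Strict Implicit. Unset Printing Implicit Defensive.
Import Order.TTheory GRing.Theory Num.Theory.
Local Open Scope ring_scope.

Section Defs.
Variables (R : realType) (n : nat).
Notation vec := 'rV[R]_n.

Definition dotv (u v : vec) : R := (u *m v^T) 0 0.
Definition enorm (u : vec) : R := Num.sqrt (dotv u u).

Definition eclosed (B : vec -> Prop) : Prop :=
  forall x, (forall e : R, 0 < e -> exists b, B b /\ enorm (b - x) < e) -> B x.

(* set-valued maps as relations: T x y <-> y \in T x *)
Definition svmap := vec -> vec -> Prop.

Definition proj (B : vec -> Prop) : svmap :=
  fun x p => B p /\ forall b, B b -> enorm (p - x) <= enorm (b - x).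

Definition refl (B : vec -> Prop) : svmap :=
  fun x r => exists p, proj B x p /\ r = 2%:R *: p - x.

Definition svcomp (T Q : svmap) : svmap :=
  fun x y => exists z, Q x z /\ T z y.

Definition svimage (T : svmap) (S : vec -> Prop) : vec -> Prop :=
  fun y => exists a, S a /\ T a y.

Definition vsubset (A B : vec -> Prop) : Prop := forall x, A x -> B x.

Definition relaxedDR (lam : R) (B1 B2 : vec -> Prop) : svmap :=
  fun x t => exists w p, svcomp (refl B1) (refl B2) x w /\ proj B2 x p /\
    t = (lam / 2%:R) *: (w + x) + (1 - lam) *: p.

Definition pane (T : svmap) (y : vec) (U : vec -> Prop) (eps : R) : Prop :=
  forall x xp yp, U x -> T x xp -> T y yp ->
    enorm (xp - yp) <= Num.sqrt (1 + eps) * enorm (x - y).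

Definition pafne (T : svmap) (y : vec) (U : vec -> Prop) (alpha eps : R) : Prop :=
  forall x xp yp, U x -> T x xp -> T y yp ->
    enorm (xp - yp) ^+ 2 <= (1 + eps) * enorm (x - y) ^+ 2
      - (1 - alpha) / alpha * enorm ((xp - x) - (yp - y)) ^+ 2.

End Defs.

(* The relaxed Douglas-Rachford map is the average T = (S + Id)/2 of
   S = lam R_{B1} R_{B2} + (1 - lam) R_{B2}, because P_{B2} = (R_{B2} + Id)/2.
   Composition multiplies and convex combination averages pointwise Lipschitz
   constants, so S has constant L = (lam sqrt(1+eps1) + 1 - lam) sqrt(1+eps2);
   the parallelogram law then shows that (S + Id)/2 is almost 1/2-firmly
   nonexpansive with violation (L^2 - 1)/2. *)
From HB Require Import structures.
From mathcomp Require Import all_boot all_order all_algebra.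
From mathcomp Require Import reals.
From mathcomp Require Import ring lra.
Set Implicit Arguments. Unset Strict Implicit. Unset Printing Implicit Defensive.
Import Order.TTheory GRing.Theory Num.Theory.
Local Open Scope ring_scope.

Section Euclidean.
Variables (R : realType) (n : nat).
Implicit Types (u v w : 'rV[R]_n) (c : R).

Lemma dotvE u v : dotv u v = \sum_i u 0 i * v 0 i.
Proof. by rewrite /dotv !mxE; apply: eq_bigr => i _; rewrite mxE. Qed.

Lemma dotvC u v : dotv u v = dotv v u.
Proof. by rewrite !dotvE; apply: eq_bigr => i _; rewrite mulrC. Qed.

Lemma dotvDl u v w : dotv (u + v) w = dotv u w + dotv v w.
Proof. by rewrite !dotvE -big_split; apply: eq_bigr => i _; rewrite mxE mulrDl. Qed.

Lemma dotvZl c u w : dotv (c *: u) w = c * dotv u w.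
Proof. by rewrite !dotvE mulr_sumr; apply: eq_bigr => i _; rewrite mxE mulrA. Qed.

Lemma dotvNl u w : dotv (- u) w = - dotv u w.
Proof. by rewrite -scaleN1r dotvZl mulN1r. Qed.

Lemma dotvDr u v w : dotv w (u + v) = dotv w u + dotv w v.
Proof. by rewrite dotvC dotvDl !(dotvC w). Qed.

Lemma dotvZr c u w : dotv w (c *: u) = c * dotv w u.
Proof. by rewrite dotvC dotvZl dotvC. Qed.

Lemma dotvNr u w : dotv w (- u) = - dotv w u.
Proof. by rewrite dotvC dotvNl dotvC. Qed.

Lemma dotv0l u : dotv 0 u = 0.
Proof. by rewrite -(scale0r 0) dotvZl mul0r. Qed.

Lemma dotv0r u : dotv u 0 = 0.
Proof. by rewrite dotvC dotv0l. Qed.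

Definition dotv_expand := (dotvDl, dotvDr, dotvZl, dotvZr, dotvNl, dotvNr).

Lemma dotvv_ge0 u : 0 <= dotv u u.
Proof. by rewrite dotvE; apply: sumr_ge0 => i _; rewrite -expr2 sqr_ge0. Qed.

Lemma dotvv_eq0 u : (dotv u u == 0) = (u == 0).
Proof.
apply/eqP/eqP => [|->]; last exact: dotv0l.
rewrite dotvE => /psumr_eq0P u0; apply/rowP => i; rewrite mxE.
apply/eqP; rewrite -sqrf_eq0 expr2 u0 // => j _.
by rewrite -expr2 sqr_ge0.
Qed.

Lemma enorm_ge0 u : 0 <= enorm u.
Proof. exact: sqrtr_ge0. Qed.

Lemma enorm_sqr u : enorm u ^+ 2 = dotv u u.
Proof. by rewrite sqr_sqrtr ?dotvv_ge0. Qed.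

Lemma enorm_gt0 u : (0 < enorm u) = (u != 0).
Proof. by rewrite sqrtr_gt0 lt_def dotvv_eq0 dotvv_ge0 andbT. Qed.

Lemma enormZ c u : enorm (c *: u) = `|c| * enorm u.
Proof. by rewrite /enorm dotvZl dotvZr mulrA -expr2 sqrtrM ?sqr_ge0 ?sqrtr_sqr. Qed.

Lemma dotv_le_enorm u v : dotv u v <= enorm u * enorm v.
Proof.
have [->|u0] := eqVneq u 0; first by rewrite dotv0l mulr_ge0 ?enorm_ge0.
have [->|v0] := eqVneq v 0; first by rewrite dotv0r mulr_ge0 ?enorm_ge0.
have uv_gt0 : 0 < enorm u * enorm v by rewrite mulr_gt0 ?enorm_gt0.
(* |(|v| u - |u| v)|^2 = 2 |u| |v| (|u| |v| - <u, v>) *)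
have := dotvv_ge0 (enorm v *: u - enorm u *: v).
rewrite !dotv_expand -!enorm_sqr (dotvC v u) => h.
nra.
Qed.

Lemma enormD u v : enorm (u + v) <= enorm u + enorm v.
Proof.
rewrite -ler_sqr ?nnegrE ?addr_ge0 ?enorm_ge0 // enorm_sqr !dotv_expand.
rewrite (dotvC v u) -!enorm_sqr.
have := dotv_le_enorm u v; lra.
Qed.

Lemma enorm_parallelogram u v :
  enorm (u + v) ^+ 2 + enorm (u - v) ^+ 2 = 2 * (enorm u ^+ 2 + enorm v ^+ 2).
Proof. by rewrite !enorm_sqr !dotv_expand (dotvC v u); ring. Qed.

End Euclidean.

Section PointwiseLipschitz.
Variables (R : realType) (n : nat).
Local Notation vec := 'rV[R]_n.
Implicit Types (T S : svmap R n) (U V : vec -> Prop).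

(* [pane T y U eps] unfolds to [lipschitz_at T y U (Num.sqrt (1 + eps))]. *)
Definition lipschitz_at T (y : vec) U (L : R) : Prop :=
  forall x xp yp, U x -> T x xp -> T y yp -> enorm (xp - yp) <= L * enorm (x - y).

Definition svconv (lam : R) (T1 T2 : svmap R n) : svmap R n :=
  fun x s => exists a b, T1 x a /\ T2 x b /\ s = lam *: a + (1 - lam) *: b.

Lemma lipschitz_at_comp T1 T2 (Lam : vec -> Prop) y U V L1 L2 :
  0 <= L1 ->
  (forall z, Lam z -> lipschitz_at T1 z V L1) ->
  (forall z, T2 y z -> Lam z) -> vsubset (svimage T2 U) V ->
  lipschitz_at T2 y U L2 -> lipschitz_at (svcomp T1 T2) y U (L1 * L2).
Proof.
move=> L1_ge0 T1_lip T2y_Lam T2U_V T2_lip x xp yp Ux [zx [T2x T1zx]] [zy [T2y T1zy]].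
have zxy : enorm (zx - zy) <= L2 * enorm (x - y) by apply: T2_lip.
rewrite -mulrA; apply: le_trans (ler_wpM2l L1_ge0 zxy).
by apply: T1_lip T1zx T1zy; [exact: T2y_Lam | apply: T2U_V; exists x].
Qed.

Lemma lipschitz_at_conv lam T1 T2 y U L1 L2 :
  0 <= lam <= 1 -> lipschitz_at T1 y U L1 -> lipschitz_at T2 y U L2 ->
  lipschitz_at (svconv lam T1 T2) y U (lam * L1 + (1 - lam) * L2).
Proof.
move=> /andP[lam_ge0 lam_le1] T1_lip T2_lip x _ _ Ux
  [ax [bx [T1x [T2x ->]]]] [ay [by_ [T1y [T2y ->]]]].
have lamC_ge0 : 0 <= 1 - lam by rewrite subr_ge0.
have -> : lam *: ax + (1 - lam) *: bx - (lam *: ay + (1 - lam) *: by_)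
        = lam *: (ax - ay) + (1 - lam) *: (bx - by_).
  by rewrite !scalerBr addrACA opprD.
apply: le_trans (enormD _ _) _.
rewrite !enormZ !ger0_norm // [leRHS]mulrDl -!mulrA.
by apply: lerD; apply: ler_wpM2l => //; [apply: T1_lip | apply: T2_lip].
Qed.

Lemma pafne_average T S y U L :
  (forall x t, T x t -> exists2 s, S x s & t = 2^-1 *: (s + x)) ->
  lipschitz_at S y U L -> pafne T y U (1 / 2) ((L ^+ 2 - 1) / 2).
Proof.
move=> T_avg S_lip x tx ty Ux /T_avg[sx Sx ->] /T_avg[sy Sy ->].
have e_le := S_lip x sx sy Ux Sx Sy.
set e := sx - sy; set d := x - y.
have -> : 2^-1 *: (sx + x) - 2^-1 *: (sy + y) = 2^-1 *: (e + d).
  by rewrite -scalerBr addrACA opprD.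
have -> : 2^-1 *: (sx + x) - x - (2^-1 *: (sy + y) - y) = 2^-1 *: (e - d).
  by apply/rowP => i; rewrite !mxE; field.
have -> : (1 - 1 / 2) / (1 / 2) = 1 :> R by field.
have e_sqr : enorm e ^+ 2 <= L ^+ 2 * enorm d ^+ 2.
  by rewrite -exprMn ler_pXn2r ?nnegrE ?enorm_ge0 // (le_trans (enorm_ge0 _) e_le).
have par := enorm_parallelogram e d.
rewrite !enormZ !exprMn ger0_norm ?invr_ge0 //.
have -> : (2^-1 : R) ^+ 2 = 1 / 4 by field.
lra.
Qed.

Lemma relaxedDR_average lam (B1 B2 : vec -> Prop) x t :
  relaxedDR lam B1 B2 x t ->
  exists2 s, svconv lam (svcomp (refl B1) (refl B2)) (refl B2) x s & t = 2^-1 *: (s + x).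
Proof.
move=> [w [p [R12x [P2x ->]]]].
exists (lam *: w + (1 - lam) *: (2%:R *: p - x)).
  by exists w, (2%:R *: p - x); split=> //; split=> //; exists p.
by apply/rowP => i; rewrite !mxE; field.
Qed.

End PointwiseLipschitz.

Theorem lemma3 (R : realType) (n : nat) (lam : R)
  (B1 B2 Lam1 Lam2 U1 U2 : 'rV[R]_n -> Prop) (eps1 eps2 : R) :
  0 <= lam <= 1 ->
  (exists b, B1 b) -> eclosed B1 ->
  (exists b, B2 b) -> eclosed B2 ->
  0 <= eps1 < 1 -> 0 <= eps2 < 1 ->
  (forall y, Lam1 y -> pane (refl B1) y U1 eps1) ->
  (forall y, Lam2 y -> pane (refl B2) y U2 eps2) ->
  vsubset (svimage (refl B2) Lam2) Lam1 ->
  vsubset (svimage (refl B2) U2) U1 ->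
  forall y, Lam2 y ->
    pafne (relaxedDR lam B1 B2) y U2 (1 / 2%:R)
      ((1 / 2%:R) * ((lam * Num.sqrt (1 + eps1) + 1 - lam) ^+ 2 * (1 + eps2) - 1)).
Proof.
move=> lam01 _ _ _ _ _ /andP[eps2_ge0 _] R1_lip R2_lip Lam_sub U_sub y Ly.
set s1 := Num.sqrt (1 + eps1); set s2 := Num.sqrt (1 + eps2).
have R2y_lip : lipschitz_at (refl B2) y U2 s2 by exact: R2_lip.
have R12_lip : lipschitz_at (svcomp (refl B1) (refl B2)) y U2 (s1 * s2).
  apply: lipschitz_at_comp R1_lip _ U_sub R2y_lip; first exact: sqrtr_ge0.
  by move=> z R2yz; apply: Lam_sub; exists y.
have S_lip := lipschitz_at_conv lam01 R12_lip R2y_lip.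
have -> : (1 / 2%:R) * ((lam * s1 + 1 - lam) ^+ 2 * (1 + eps2) - 1)
        = ((lam * (s1 * s2) + (1 - lam) * s2) ^+ 2 - 1) / 2.
  have s2_sqr : s2 ^+ 2 = 1 + eps2 by rewrite sqr_sqrtr // addr_ge0.
  by rewrite -s2_sqr; field.
exact: pafne_average (@relaxedDR_average _ _ lam B1 B2) S_lip.
Qed.
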